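(* Let $n\ge 1$ and let $M\le N$ be integers. The maximal chains in the partially ordered set of all pure diagrams lying in $B_{M,N}$ (of any codimension $0,1,\dots,n$) are in one-to-one correspondence with the numberings of the entries of an $(N-M+1)\times(n+1)$ matrix by the numbers $1,2,\dots,(N-M+1)(n+1)$, each used exactly once, such that the numbers increase from right to left along each row and from top to bottom along each column.
   Context: $B_{M,N}$ is the $\mathbb Q$-vector space of arrays $\beta=(\beta_{i,j})$ indexed by $0\le i\le n$, $j\in\mathbb Z$, with $\beta_{i,j}=0$ unless $M+i\le j\le N+i$. For integers $d_0<d_1<\dots<d_t$ with $0\le t\le n$, the pure diagram $\pi(d_0,\dots,d_t)$ is the array whose entry in position $(i,d_i)$ is $(-1)^i\prod_{0\le j\le t,\,j\ne i}\frac{1}{d_j-d_i}$ for $i=0,\dots,t$, and whose other entries are $0$; its codimension is $t$. It lies in $B_{M,N}$ iff $M+i\le d_i\le N+i$ for all $i$. Partial order: $\pi(d_0,\dots,d_t)\le\pi(d'_0,\dots,d'_u)$ iff $t\ge u$ and $d_i\le d'_i$ for $i=0,\dots,u$. A maximal chain is a totally ordered subset not properly contained in another totally ordered subset. *)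

From mathcomp Require Import all_boot all_order all_algebra.
Unset Printing Implicit Defensive.
Import Order.TTheory GRing.Theory Num.Theory.
Local Open Scope ring_scope.

Definition array (n : nat) := 'I_n.+1 -> int -> rat.

Definition degseq := seq int.

Definition pure_diagram (n : nat) (d : degseq) : array n :=
  fun i j =>
    if ((i : nat) < size d)%N && (j == nth 0 d i) then
      (-1) ^+ (i : nat) *
      \prod_(k < size d | (k : nat) != (i : nat))
         ((nth 0 d k - nth 0 d i)%:~R)^-1
    else 0.

(* d_0 < d_1 < ... < d_t with 0 <= t <= n, and M + i <= d_i <= N + i
   (i.e. pi(d) lies in B_{M,N}). *)
Definition valid_degseq (n : nat) (M N : int) (d : degseq) : bool :=
  [&& (0 < size d)%N, (size d <= n.+1)%N, sorted (fun a b : int => a < b) d &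
      all (fun i : nat => (M + i%:Z <= nth 0 d i) && (nth 0 d i <= N + i%:Z))
          (iota 0 (size d))].

(* pi(d_0..d_t) <= pi(d'_0..d'_u) iff t >= u and d_i <= d'_i for i = 0..u. *)
Definition degseq_le (d d' : degseq) : Prop :=
  (size d' <= size d)%N /\ forall i : nat, (i < size d')%N -> nth 0 d i <= nth 0 d' i.

Definition pure_in_B (n : nat) (M N : int) (b : array n) : Prop :=
  exists d, valid_degseq n M N d /\ b = pure_diagram n d.

Definition pure_le (n : nat) (M N : int) (b b' : array n) : Prop :=
  exists d d', [/\ valid_degseq n M N d, valid_degseq n M N d',
                   b = pure_diagram n d, b' = pure_diagram n d' & degseq_le d d'].

Definition is_chain (n : nat) (M N : int) (C : array n -> Prop) : Prop :=
  (forall b, C b -> pure_in_B n M N b) /\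
  (forall b b', C b -> C b' -> pure_le n M N b b' \/ pure_le n M N b' b).

Definition is_maximal_chain (n : nat) (M N : int) (C : array n -> Prop) : Prop :=
  is_chain n M N C /\
  forall C' : array n -> Prop, is_chain n M N C' -> (forall b, C b -> C' b) ->
    forall b, C' b -> C b.

Definition maximal_chain (n : nat) (M N : int) :=
  {C : array n -> Prop | is_maximal_chain n M N C}.

Definition is_numbering (r c : nat) (f : 'I_r -> 'I_c -> nat) : Prop :=
  [/\ (forall i j, (1 <= f i j <= r * c)%N),
      (forall i j i' j', f i j = f i' j' -> i = i' /\ j = j'),
      (forall i (j j' : 'I_c), (j < j')%N -> (f i j' < f i j)%N) &
      (forall (i i' : 'I_r) j, (i < i')%N -> (f i j < f i' j)%N)].

Definition numbering (r c : nat) := {f : 'I_r -> 'I_c -> nat | is_numbering r c f}.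

(* Write a pure diagram of B_{M,N} as pi(d_0, ..., d_t) and put h_j = d_j - M - j for j <= t
   and h_j = N - M + 1 for t < j <= n.  The h_j are the column heights of a staircase shape in
   an (N - M + 1) x (n + 1) box (nondecreasing from left to right, never containing the bottom
   left cell), and the order on pure diagrams is inclusion of shapes.  Shapes are ranked by
   their number of cells, and between two comparable shapes one can always add a single cell to
   the smaller one and stay below the larger one; hence a maximal chain contains one shape of
   each rank 0, ..., (N - M + 1)(n + 1) - 1.  Labelling every cell by the step of the chain at
   which it appears (the missing bottom left cell comes last) gives a numbering of the box as in
   the statement, and conversely the cells labelled at most k, for k = 0, 1, ..., cut out the
   shapes of a maximal chain. *)

From mathcomp Require Import all_boot all_order all_algebra zify.
From Stdlib Require Import Classical FunctionalExtensionality PropExtensionality.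
From Stdlib Require Import IndefiniteDescription ProofIrrelevance Wf_nat.
Set Implicit Arguments. Unset Strict Implicit. Unset Printing Implicit Defensive.
Import GRing.Theory.

Section Counting.
Variable r : nat.
Implicit Types (p : pred 'I_r) (A B : 'I_r -> nat).

Lemma sum_ltn_ord t : \sum_(i < r) (i < t : nat) = minn r t.
Proof.
elim: r => [|r' IH]; first by rewrite big_ord0 min0n.
by rewrite big_ord_recr /= IH; case: (ltnP r' t) => h; lia.
Qed.

Lemma sum_pred_leq p : \sum_(i < r) p i <= r.
Proof.
rewrite -[leqRHS]card_ord -sum1_card; apply: leq_sum => i _; exact: leq_b1.
Qed.

Lemma leq_sum_pred (p q : pred 'I_r) :
  (forall i, p i -> q i) -> \sum_(i < r) p i <= \sum_(i < r) q i.
Proof. by move=> pq; apply: leq_sum => i _; case: (boolP (p i)) => // /pq ->. Qed.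

(* For a downward closed [p], [\sum_i p i] is the first index outside [p]. *)
Lemma ltn_sum_downclosed p :
  (forall i i' : 'I_r, i' <= i -> p i -> p i') ->
  forall i : 'I_r, (i < \sum_(i0 < r) p i0) = p i.
Proof.
move=> p_down i; case pi: (p i).
  have le_sum : \sum_(i0 < r) (i0 < i.+1 : nat) <= \sum_(i0 < r) p i0.
    by apply: leq_sum => j _; case: (ltnP j i.+1) => // /p_down/(_ pi) ->.
  by apply: leq_trans le_sum; rewrite sum_ltn_ord leq_min ltn_ord ltnSn.
have le_sum : \sum_(i0 < r) p i0 <= \sum_(i0 < r) (i0 < i : nat).
  apply: leq_sum => j _; case pj: (p j) => //; case: (ltnP j i) => // le_ij.
  by move: pi; rewrite (p_down _ _ le_ij pj).
by apply/negbTE; rewrite -leqNgt; apply: leq_trans le_sum _; rewrite sum_ltn_ord geq_minr.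
Qed.

Lemma eq_from_leq_sum A B :
  (forall j, A j <= B j) -> \sum_j A j = \sum_j B j -> A = B.
Proof.
move=> leAB eqAB; apply: functional_extensionality => j.
have := @leqif_sum _ predT (fun j => A j == B j) A B.
case=> [i _|_ /esym]; first exact/leqif_eq/leAB.
by rewrite eqAB eqxx => /forall_inP/(_ j isT)/eqP.
Qed.

Lemma leq_sum_succ A B :
  (forall j, A j <= B j) -> \sum_j B j = (\sum_j A j).+1 ->
  forall j j', A j < B j -> A j' < B j' -> j = j' /\ B j = (A j).+1.
Proof.
move=> leAB eqAB j j' ltj ltj'.
have sumD : \sum_j (B j - A j) = 1.
  have : \sum_j B j = \sum_j A j + \sum_j (B j - A j).
    by rewrite -big_split; apply: eq_bigr => i _ /=; rewrite subnKC.
  lia.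
have leD i : B i - A i <= \sum_j (B j - A j) by rewrite (bigD1 i) //= leq_addr.
split; last by have := leD j; rewrite sumD; lia.
case: (eqVneq j j') => // neq; move: sumD.
by rewrite (bigD1 j) //= (bigD1 j') /= 1?eq_sym ?neq //; lia.
Qed.

End Counting.

Section Shapes.
Variables m n : nat.
Notation shape := ('I_n.+1 -> nat).
Implicit Types h H U X Y : shape.

Definition ncells := m.+1 * n.+1.
Definition shape_rank h := \sum_j h j.
Definition shape_le h h' := forall j, h j <= h' j.
(* [h] lists the column heights: the shape is the set of cells [(i, j)] with [i < h j]. *)
Definition is_shape h :=
  [/\ forall j j' : 'I_n.+1, j <= j' -> h j <= h j', h ord0 <= m & forall j, h j <= m.+1].
Definition shape_top : shape := fun j => if j == ord0 then m else m.+1.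

Lemma shape_le_refl h : shape_le h h.
Proof. by move=> j. Qed.

Lemma shape_le_trans h1 h2 h3 : shape_le h1 h2 -> shape_le h2 h3 -> shape_le h1 h3.
Proof. by move=> le12 le23 j; apply: leq_trans (le12 j) (le23 j). Qed.

Lemma leq_shape_rank h h' : shape_le h h' -> shape_rank h <= shape_rank h'.
Proof. by move=> le_hh'; apply: leq_sum => j _. Qed.

Lemma shape_le_rank_eq h h' : shape_le h h' -> shape_rank h = shape_rank h' -> h = h'.
Proof. exact: eq_from_leq_sum. Qed.

Lemma ncells_gt0 : 0 < ncells.
Proof. by rewrite muln_gt0. Qed.

Lemma shape_rank_top : shape_rank shape_top = ncells.-1.
Proof.
rewrite /shape_rank big_ord_recl /shape_top eqxx.
rewrite (eq_bigr (fun=> m.+1)) // sum_nat_const card_ord /ncells; lia.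
Qed.

Lemma is_shape0 : is_shape (fun _ => 0).
Proof. by []. Qed.

Lemma is_shape_top : is_shape shape_top.
Proof.
split=> [j j' le_jj'||j]; rewrite /shape_top ?eqxx //; last by case: eqP.
case: eqP => [_|/eqP nj0]; case: eqP => [j'0|//]; rewrite //.
by move: le_jj' nj0; rewrite j'0 leqn0 -(inj_eq val_inj) => ->.
Qed.

Lemma shape_le_top h : is_shape h -> shape_le h shape_top.
Proof. by case=> _ h0 hm j; rewrite /shape_top; case: eqP => [->|]. Qed.

Lemma shape_rank_lt h : is_shape h -> shape_rank h < ncells.
Proof.
move/shape_le_top/leq_shape_rank; rewrite shape_rank_top.
by have := ncells_gt0; lia.
Qed.

(* Add one cell to the rightmost column where [H] and [U] differ. *)
Lemma shape_cover H U :
  is_shape H -> is_shape U -> shape_le H U -> shape_rank H < shape_rank U ->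
  exists X, [/\ is_shape X, shape_le H X, shape_le X U & shape_rank X = (shape_rank H).+1].
Proof.
move=> [monH _ _] [monU U0 Um] HU ltHU.
case: (pickP (fun j => H j < U j)) => [j0 ltj0|eqHU]; last first.
  have UH : shape_le U H by move=> j; have := eqHU j; rewrite /= ltnNge => /negbFE.
  by have := leq_shape_rank UH; rewrite leqNgt ltHU.
have [c ltc c_max] := @arg_maxnP _ j0 (fun j => H j < U j) val ltj0.
pose X j := H j + (j == c).
have HX : shape_le H X by move=> j; rewrite leq_addr.
have XU : shape_le X U by move=> j; rewrite /X; case: eqP => [->|_]; rewrite ?addn1 ?addn0.
exists X; split => //; last first.
  have sum_c : \sum_(i < n.+1) (i == c : nat) = 1.
    by rewrite (bigD1 c) //= eqxx big1 // => i /negbTE ->.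
  by rewrite /shape_rank big_split /= sum_c addn1.
split=> [j j' le_jj'||j]; [|exact: leq_trans (XU _) U0|exact: leq_trans (XU _) (Um _)].
rewrite /X; case: (eqVneq j c) => [ejc|_]; last first.
  by rewrite addn0; apply: leq_trans (monH _ _ le_jj') (leq_addr _ _).
rewrite -ejc in ltc c_max *; case: (eqVneq j' j) => [-> //|nej'].
have lt_jj' : j < j' by rewrite ltn_neqAle le_jj' andbT (inj_eq val_inj) eq_sym nej'.
have : ~~ (H j' < U j') by apply/negP => /c_max /=; rewrite leqNgt lt_jj'.
rewrite -leqNgt addn0 addn1 => leUH.
exact: leq_trans ltc (leq_trans (monU _ _ le_jj') leUH).
Qed.

Section MaximalChains.
Variable C : shape -> Prop.
Hypothesis C_shape : forall h, C h -> is_shape h.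
Hypothesis C_total : forall h h', C h -> C h' -> shape_le h h' \/ shape_le h' h.
Hypothesis C_max :
  forall X, is_shape X -> (forall h, C h -> shape_le h X \/ shape_le X h) -> C X.

Lemma chain_rank_inj h h' : C h -> C h' -> shape_rank h = shape_rank h' -> h = h'.
Proof.
move=> Ch Ch' eq_rank; case: (C_total Ch Ch') => le_hh'; first exact: shape_le_rank_eq.
by apply/esym/shape_le_rank_eq.
Qed.

Lemma chain_bot : C (fun _ => 0).
Proof. by apply: C_max is_shape0 _ => h _; right. Qed.

Lemma chain_top : C shape_top.
Proof. by apply: C_max is_shape_top _ => h /C_shape/shape_le_top; left. Qed.

(* Below the shape [U] of least rank above [H] in [C], adding one cell to [H] gives a shape
   comparable to all of [C], which therefore lies in [C]. *)
Lemma chain_rank_succ H :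
  C H -> (shape_rank H).+1 < ncells -> exists X, C X /\ shape_rank X = (shape_rank H).+1.
Proof.
move=> CH lt_top.
pose above s := exists U, [/\ C U, shape_rank H < s & shape_rank U = s].
have above_top : above ncells.-1.
  by exists shape_top; split; [exact: chain_top | lia | exact: shape_rank_top].
have [s [[[U [CU ltHs eUs]] s_min] _]] :=
  @dec_inh_nat_subset_has_unique_least_element above (fun s => classic (above s))
    (ex_intro above _ above_top).
have HU : shape_le H U.
  by case: (C_total CH CU) => // /leq_shape_rank; rewrite leqNgt eUs ltHs.
have ltHU : shape_rank H < shape_rank U by rewrite eUs.
have [X [sX HX XU rX]] := shape_cover (C_shape CH) (C_shape CU) HU ltHU.
exists X; split => //; apply: C_max => // Y CY.
case: (C_total CY CH) => [YH|HY]; first by left; exact: shape_le_trans YH HX.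
case: (ltngtP (shape_rank H) (shape_rank Y)) => [ltHY|ltYH|eqHY].
- have leUY : s <= shape_rank Y by apply/leP/s_min; exists Y.
  case: (C_total CY CU) => [YU|UY]; last by right; exact: shape_le_trans XU UY.
  have eYU : Y = U.
    by apply: (shape_le_rank_eq YU); apply/eqP; rewrite eqn_leq (leq_shape_rank YU) eUs.
  by right; rewrite eYU.
- by rewrite ltnNge leq_shape_rank in ltYH.
- by left; rewrite (chain_rank_inj CY CH) // eqHY.
Qed.

Lemma chain_has_rank k : k < ncells -> exists h, C h /\ shape_rank h = k.
Proof.
elim: k => [|k IH] lt_k.
  by exists (fun _ => 0); split; [exact: chain_bot | rewrite /shape_rank big1].
have [H [CH eHk]] := IH (ltnW lt_k); rewrite -eHk in lt_k *; exact: chain_rank_succ CH lt_k.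
Qed.

End MaximalChains.

Definition numbering_shape (f : 'I_m.+1 -> 'I_n.+1 -> nat) k : shape :=
  fun j => \sum_(i < m.+1) (f i j <= k).

Section NumberingShapes.
Variable f : 'I_m.+1 -> 'I_n.+1 -> nat.
Hypothesis f_num : is_numbering m.+1 n.+1 f.

Lemma numbering_bounds i j : 0 < f i j <= ncells.
Proof. by case: f_num. Qed.

Lemma numbering_mono_row (i i' : 'I_m.+1) j : i <= i' -> f i j <= f i' j.
Proof.
case: f_num => _ _ _ f_col; rewrite leq_eqVlt => /orP [/eqP/val_inj -> //|lt_ii'].
exact/ltnW/f_col.
Qed.

Lemma numbering_anti_col i (j j' : 'I_n.+1) : j <= j' -> f i j' <= f i j.
Proof.
case: f_num => _ _ f_row _; rewrite leq_eqVlt => /orP [/eqP/val_inj -> //|lt_jj'].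
exact/ltnW/f_row.
Qed.

Lemma ltn_numbering_shape k (i : 'I_m.+1) j : (i < numbering_shape f k j) = (f i j <= k).
Proof.
apply: (@ltn_sum_downclosed _ (fun i => f i j <= k)) => i1 i2 le21.
exact/leq_trans/numbering_mono_row.
Qed.

Definition cell_index (x : 'I_m.+1 * 'I_n.+1) : 'I_ncells.
Proof. by apply: (@Ordinal _ (f x.1 x.2).-1); have := numbering_bounds x.1 x.2; lia. Defined.

Lemma cell_index_bij : bijective cell_index.
Proof.
apply: inj_card_bij; last by rewrite card_prod !card_ord.
move=> [i j] [i' j'] /(congr1 val) /= eq_pred.
have eq_f : f i j = f i' j'.
  by have := numbering_bounds i j; have := numbering_bounds i' j'; lia.
by case: f_num => _ f_inj _ _; case: (f_inj _ _ _ _ eq_f) => -> ->.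
Qed.

Lemma shape_rank_numbering_shape k : k <= ncells -> shape_rank (numbering_shape f k) = k.
Proof.
move=> le_k; rewrite /shape_rank /numbering_shape exchange_big pair_big /=.
transitivity (\sum_(v < ncells) (v < k : nat)); last by rewrite sum_ltn_ord; apply/minn_idPr.
rewrite [RHS](reindex cell_index) /=; last exact/onW_bij/cell_index_bij.
apply: eq_bigr => -[i j] _ /=.
by have := numbering_bounds i j; case: (f i j).
Qed.

Lemma is_shape_numbering_shape k : k < ncells -> is_shape (numbering_shape f k).
Proof.
move=> lt_k; split=> [j j' le_jj'||j]; last exact: sum_pred_leq.
  by apply: leq_sum_pred => i /(leq_trans (numbering_anti_col i le_jj')).
rewrite leqNgt (ltn_numbering_shape k ord_max); apply/negP => max_le_k.
have all_le i j : f i j <= k.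
  apply: leq_trans (@numbering_anti_col i ord0 j (leq0n _)) (leq_trans _ max_le_k).
  exact/numbering_mono_row/leq_ord.
have := shape_rank_numbering_shape (ltnW lt_k).
rewrite /shape_rank /numbering_shape.
under eq_bigr do under eq_bigr do rewrite all_le.
rewrite sum_nat_const card_ord sum_nat_const card_ord muln1 mulnC => eq_k.
by move: lt_k; rewrite -eq_k /ncells ltnn.
Qed.

Lemma numbering_shape_mono k k' :
  k <= k' -> shape_le (numbering_shape f k) (numbering_shape f k').
Proof.
by move=> le_kk' j; apply: leq_sum_pred => i /leq_trans; apply.
Qed.

End NumberingShapes.

Lemma numbering_shape_inj f g :
  is_numbering m.+1 n.+1 f -> is_numbering m.+1 n.+1 g ->
  (forall k, k < ncells -> numbering_shape f k = numbering_shape g k) -> f = g.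
Proof.
move=> f_num g_num eq_fg.
apply: functional_extensionality => i; apply: functional_extensionality => j.
have [/andP [_ le_f] /andP [_ le_g]] :=
  (numbering_bounds f_num i j, numbering_bounds g_num i j).
have eq_le k : k < ncells -> (f i j <= k) = (g i j <= k).
  by move=> lt_k; rewrite -(ltn_numbering_shape f_num) -(ltn_numbering_shape g_num) eq_fg.
apply/eqP; rewrite eqn_leq; apply/andP; split.
- case: (ltnP (g i j) ncells) => [lt_g|ge_g]; last exact: leq_trans le_f ge_g.
  by rewrite eq_le.
- case: (ltnP (f i j) ncells) => [lt_f|ge_f]; last exact: leq_trans le_g ge_f.
  by rewrite -eq_le.
Qed.

(* The cell [(i, j)] gets the number of steps of the chain in which it is still absent. *)
Definition chain_numbering (H : nat -> shape) (i : 'I_m.+1) (j : 'I_n.+1) : nat :=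
  \sum_(k < ncells) ~~ (i < H k j).

Section RankedChains.
Variable H : nat -> shape.
Hypothesis H_shape : forall k, k < ncells -> is_shape (H k).
Hypothesis H_rank : forall k, k < ncells -> shape_rank (H k) = k.
Hypothesis H_mono : forall k k', k <= k' -> k' < ncells -> shape_le (H k) (H k').

Lemma ltn_chain_numbering i j k :
  k < ncells -> (k < chain_numbering H i j) = ~~ (i < H k j).
Proof.
move=> lt_k; apply: (@ltn_sum_downclosed _ _ _ (Ordinal lt_k)) => k1 k2 le21.
by rewrite -!leqNgt => /(leq_trans _)->; last exact: (H_mono le21).
Qed.

Lemma ranked_chain0 : H 0 = fun _ => 0.
Proof.
apply: functional_extensionality => j.
have : H 0 j <= shape_rank (H 0) by rewrite /shape_rank (bigD1 j) //= leq_addr.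
by rewrite H_rank ?ncells_gt0 // leqn0 => /eqP.
Qed.

Lemma ranked_chain_last : H ncells.-1 = shape_top.
Proof.
have lt_last : ncells.-1 < ncells by rewrite prednK ?ncells_gt0.
apply: shape_le_rank_eq; first exact/shape_le_top/H_shape.
by rewrite H_rank // shape_rank_top.
Qed.

Lemma chain_numbering_bounds i j : 0 < chain_numbering H i j <= ncells.
Proof.
by rewrite ltn_chain_numbering ?ncells_gt0 // ranked_chain0 sum_pred_leq.
Qed.

Lemma chain_numbering_inj i j i' j' :
  chain_numbering H i j = chain_numbering H i' j' -> i = i' /\ j = j'.
Proof.
set v := chain_numbering H i j => eq_v.
have /andP [v_gt0 v_le] := chain_numbering_bounds i j.
have absent (i0 : 'I_m.+1) j0 : chain_numbering H i0 j0 = v -> H v.-1 j0 <= i0.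
  by move=> eq0; rewrite leqNgt -ltn_chain_numbering; try rewrite eq0; lia.
have [absent_ij absent_ij'] := (absent _ _ erefl, absent _ _ (esym eq_v)).
case: (ltnP v ncells) => [lt_v|ge_v].
  have present (i0 : 'I_m.+1) j0 : chain_numbering H i0 j0 = v -> i0 < H v j0.
    by move=> eq0; apply/negPn; rewrite -ltn_chain_numbering // eq0 ltnn.
  have [present_ij present_ij'] := (present _ _ erefl, present _ _ (esym eq_v)).
  have rank_succ : shape_rank (H v) = (shape_rank (H v.-1)).+1.
    by rewrite !H_rank; lia.
  have [eq_jj' eq_succ] := leq_sum_succ (H_mono (leq_pred v) lt_v) rank_succ
    (leq_ltn_trans absent_ij present_ij) (leq_ltn_trans absent_ij' present_ij').
  subst j'; split=> //; apply: val_inj => /=.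
  by move: present_ij present_ij' absent_ij absent_ij'; rewrite eq_succ; lia.
have last_v : v = ncells by apply/eqP; rewrite eqn_leq v_le.
rewrite last_v ranked_chain_last /shape_top in absent_ij absent_ij'.
move: absent_ij absent_ij' (ltn_ord i) (ltn_ord i').
do 2 case: eqP => [->|_] //=; try lia.
by move=> *; split=> //; apply: val_inj => /=; lia.
Qed.

Lemma is_numbering_chain_numbering : is_numbering m.+1 n.+1 (chain_numbering H).
Proof.
split; [exact: chain_numbering_bounds | exact: chain_numbering_inj | |].
- move=> i j j' lt_jj'.
  have le_col : chain_numbering H i j' <= chain_numbering H i j.
    apply: leq_sum_pred => k; rewrite -!leqNgt; apply: leq_trans.
    by case: (H_shape (ltn_ord k)) => H_col _ _; apply/H_col/ltnW.
  rewrite ltn_neqAle le_col andbT; apply/eqP => /chain_numbering_inj [_ eq_jj'].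
  by rewrite eq_jj' ltnn in lt_jj'.
- move=> i i' j lt_ii'.
  have le_row : chain_numbering H i j <= chain_numbering H i' j.
    by apply: leq_sum_pred => k; rewrite -!leqNgt => /leq_trans; apply; apply: ltnW.
  rewrite ltn_neqAle le_row andbT; apply/eqP => /chain_numbering_inj [eq_ii' _].
  by rewrite eq_ii' ltnn in lt_ii'.
Qed.

Lemma numbering_shape_chain_numbering k :
  k < ncells -> numbering_shape (chain_numbering H) k = H k.
Proof.
move=> lt_k; apply: functional_extensionality => j.
transitivity (\sum_(i < m.+1) (i < H k j : nat)).
  by apply: eq_bigr => i _; rewrite leqNgt ltn_chain_numbering // negbK.
by rewrite sum_ltn_ord; apply/minn_idPr; case: (H_shape lt_k) => _ _ ->.
Qed.

End RankedChains.
End Shapes.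

Lemma valid_degseq_size n M N d : valid_degseq n M N d -> 0 < size d <= n.+1.
Proof. by case/and4P=> -> ->. Qed.

Lemma valid_degseq_uniq n M N d : valid_degseq n M N d -> uniq d.
Proof. by case/and4P=> _ _ /Order.POrderTheory.lt_sorted_uniq. Qed.

Section DegreeSequences.
Variables (m n : nat) (M : int).
Notation N := (M + m%:Z)%R.
Notation shape := ('I_n.+1 -> nat).
Implicit Types (h : shape) (d : degseq).

Definition degseq_shape d : shape := fun j =>
  if j < size d then absz (nth 0%R d j - M - (j : nat)%:Z)%R else m.+1.

Definition shape_length h := \sum_(j < n.+1) (h j <= m).

Definition shape_degseq h : degseq :=
  mkseq (fun j => (M + j%:Z + (h (inord j))%:Z)%R) (shape_length h).

Lemma ltn_shape_length h :
  is_shape m h -> forall j : 'I_n.+1, (j < shape_length h) = (h j <= m).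
Proof.
case=> h_mono _ _; apply: (@ltn_sum_downclosed _ (fun j => h j <= m)) => j j' le_j'j.
exact/leq_trans/h_mono.
Qed.

Lemma shape_length_bounds h : is_shape m h -> 0 < shape_length h <= n.+1.
Proof.
move=> h_shape; rewrite sum_pred_leq andbT.
by rewrite (ltn_shape_length h_shape ord0); case: h_shape.
Qed.

Lemma size_shape_degseq h : size (shape_degseq h) = shape_length h.
Proof. exact: size_mkseq. Qed.

Lemma nth_shape_degseq h j :
  j < shape_length h -> nth 0%R (shape_degseq h) j = (M + j%:Z + (h (inord j))%:Z)%R.
Proof. exact: nth_mkseq. Qed.

Section ShapeColumns.
Variable h : shape.
Hypothesis h_shape : is_shape m h.

Lemma shape_length_ltn j : j < shape_length h -> j < n.+1.
Proof. by move=> lt_j; apply: leq_trans lt_j _; case/andP: (shape_length_bounds h_shape). Qed.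

Lemma shape_inord_le j : j < shape_length h -> h (inord j) <= m.
Proof.
by move=> lt_j; rewrite -ltn_shape_length // inordK //; exact: shape_length_ltn.
Qed.

Lemma shape_inord_mono i j : i <= j -> j < shape_length h -> h (inord i) <= h (inord j).
Proof.
move=> le_ij /shape_length_ltn lt_j; case: h_shape => h_mono _ _; apply: h_mono.
by rewrite !inordK //; exact: leq_ltn_trans le_ij lt_j.
Qed.

End ShapeColumns.

Lemma valid_shape_degseq h : is_shape m h -> valid_degseq n M N (shape_degseq h).
Proof.
move=> h_shape; have /andP [len_gt0 len_le] := shape_length_bounds h_shape.
rewrite /valid_degseq size_shape_degseq len_gt0 len_le /=; apply/andP; split.
  apply/(sortedP 0%R) => i; rewrite size_shape_degseq => lt_i.
  rewrite !nth_shape_degseq //; last exact: ltnW.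
  by have := shape_inord_mono h_shape (leqnSn i) lt_i; lia.
apply/allP => i; rewrite mem_iota add0n => /andP [_ lt_i].
by rewrite nth_shape_degseq //; have := shape_inord_le h_shape lt_i; lia.
Qed.

Section ValidDegseq.
Variable d : degseq.
Hypothesis d_valid : valid_degseq n M N d.

Lemma valid_degseq_bounds j :
  j < size d -> (M + j%:Z <= nth 0%R d j)%R /\ (nth 0%R d j <= M + m%:Z + j%:Z)%R.
Proof.
case/and4P: d_valid => _ _ _ /allP d_bounds lt_j.
have /andP [lb ub] : (M + j%:Z <= nth 0%R d j)%R && (nth 0%R d j <= N + j%:Z)%R.
  by apply: d_bounds; rewrite mem_iota add0n lt_j.
by split=> //; lia.
Qed.

Lemma valid_degseq_gap i k : i + k < size d -> (nth 0%R d i + k%:Z <= nth 0%R d (i + k))%R.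
Proof.
case/and4P: d_valid => _ _ /(sortedP 0%R) d_sorted _.
elim: k => [|k IH] lt_ik; first by rewrite addn0; lia.
have lt_ik' : i + k < size d by rewrite addnS in lt_ik; exact: ltnW.
have := d_sorted (i + k); rewrite -addnS => /(_ lt_ik).
by have := IH lt_ik'; lia.
Qed.

Lemma degseq_shapeE (j : 'I_n.+1) :
  j < size d -> ((degseq_shape d j)%:Z = nth 0%R d j - M - (j : nat)%:Z)%R.
Proof. by move=> lt_j; rewrite /degseq_shape lt_j; have := valid_degseq_bounds lt_j; lia. Qed.

Lemma degseq_shape_le (j : 'I_n.+1) : j < size d -> degseq_shape d j <= m.
Proof. by move=> lt_j; have := degseq_shapeE lt_j; have := valid_degseq_bounds lt_j; lia. Qed.

Lemma degseq_shape_full (j : 'I_n.+1) : size d <= j -> degseq_shape d j = m.+1.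
Proof. by rewrite /degseq_shape ltnNge => ->. Qed.

Lemma degseq_shape_leS (j : 'I_n.+1) : degseq_shape d j <= m.+1.
Proof.
by case: (ltnP j (size d)) => [/degseq_shape_le/leqW|/degseq_shape_full ->].
Qed.

Lemma is_shape_degseq_shape : is_shape m (degseq_shape d).
Proof.
have /andP [size_gt0 _] := valid_degseq_size d_valid.
split=> [j j' le_jj'||]; [|exact: (degseq_shape_le (j := ord0))|exact: degseq_shape_leS].
case: (ltnP j' (size d)) => [lt_j'|ge_j'].
  2: by rewrite (degseq_shape_full ge_j') degseq_shape_leS.
have lt_j : j < size d := leq_ltn_trans le_jj' lt_j'.
have := valid_degseq_gap (i := j) (k := j' - j); rewrite subnKC // => /(_ lt_j').
by have := degseq_shapeE lt_j; have := degseq_shapeE lt_j'; move: le_jj'; lia.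
Qed.

Lemma shape_length_degseq_shape : shape_length (degseq_shape d) = size d.
Proof.
have /andP [_ size_le] := valid_degseq_size d_valid.
transitivity (\sum_(j < n.+1) (j < size d : nat)).
  2: by rewrite sum_ltn_ord; apply/minn_idPr.
apply: eq_bigr => j _; case: (ltnP j (size d)) => [/degseq_shape_le -> //|].
by move/degseq_shape_full ->; rewrite ltnn.
Qed.

Lemma degseq_shapeK : shape_degseq (degseq_shape d) = d.
Proof.
have /andP [_ size_le] := valid_degseq_size d_valid.
apply: (@eq_from_nth _ 0%R); first by rewrite size_shape_degseq shape_length_degseq_shape.
move=> j; rewrite size_shape_degseq shape_length_degseq_shape => lt_j.
have lt_jn : j < n.+1 := leq_trans lt_j size_le.
rewrite nth_shape_degseq ?shape_length_degseq_shape //.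
by have := degseq_shapeE (j := inord j); rewrite inordK //; move/(_ lt_j); lia.
Qed.

End ValidDegseq.

Lemma shape_degseqK h : is_shape m h -> degseq_shape (shape_degseq h) = h.
Proof.
move=> h_shape; apply: functional_extensionality => j.
rewrite /degseq_shape size_shape_degseq ltn_shape_length //.
case: leqP => [le_m|gt_m].
  by rewrite nth_shape_degseq ?ltn_shape_length // inord_val; lia.
by case: h_shape => _ _ /(_ j); lia.
Qed.

Lemma degseq_le_shape_le d d' :
  valid_degseq n M N d -> valid_degseq n M N d' ->
  degseq_le d d' <-> shape_le (degseq_shape d) (degseq_shape d').
Proof.
move=> d_valid d'_valid; split.
  case=> size_le le_dd' j; case: (ltnP j (size d')) => [lt_j'|ge_j'].
    have lt_j : j < size d := leq_trans lt_j' size_le.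
    have := le_dd' _ lt_j'; have := degseq_shapeE d_valid lt_j.
    by have := degseq_shapeE d'_valid lt_j'; lia.
  by rewrite (degseq_shape_full ge_j') degseq_shape_leS.
move=> le_hh'; have /andP [_ size_le] := valid_degseq_size d_valid.
have /andP [_ size_le'] := valid_degseq_size d'_valid.
have size_le_d : size d' <= size d.
  rewrite leqNgt; apply/negP => lt_size.
  have lt_n : size d < n.+1 := leq_trans lt_size size_le'.
  have := le_hh' (Ordinal lt_n); rewrite degseq_shape_full //=.
  by have := degseq_shape_le d'_valid (j := Ordinal lt_n) lt_size; lia.
split=> // i lt_i'; have lt_i : i < size d := leq_trans lt_i' size_le_d.
have lt_n : i < n.+1 := leq_trans lt_i size_le.
have := le_hh' (Ordinal lt_n); have := degseq_shapeE d_valid (j := Ordinal lt_n) lt_i.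
by have := degseq_shapeE d'_valid (j := Ordinal lt_n) lt_i'; rewrite /=; lia.
Qed.

End DegreeSequences.

Lemma pure_diagram_neq0 n d (i : 'I_n.+1) :
  uniq d -> i < size d -> pure_diagram n d i (nth 0%R d i) != 0%R.
Proof.
move=> d_uniq lt_i; rewrite /pure_diagram lt_i eqxx /=.
rewrite mulf_neq0 ?expf_neq0 ?oppr_eq0 ?oner_eq0 //.
by apply/prodf_neq0 => k ne_ki; rewrite invr_eq0 intr_eq0 subr_eq0 nth_uniq.
Qed.

Lemma pure_diagram_support n M N d d' i :
  valid_degseq n M N d -> pure_diagram n d = pure_diagram n d' ->
  i < size d -> i < size d' /\ nth 0%R d i = nth 0%R d' i.
Proof.
move=> d_valid eq_dd' lt_i; have /andP [_ size_le] := valid_degseq_size d_valid.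
have lt_n : i < n.+1 := leq_trans lt_i size_le.
have := pure_diagram_neq0 (i := Ordinal lt_n) (valid_degseq_uniq d_valid) lt_i.
by rewrite eq_dd' /pure_diagram /=; case: ifP => // /andP [-> /eqP ->].
Qed.

Lemma pure_diagram_inj n M N d d' :
  valid_degseq n M N d -> valid_degseq n M N d' ->
  pure_diagram n d = pure_diagram n d' -> d = d'.
Proof.
move=> d_valid d'_valid eq_dd'.
have size_le a b : valid_degseq n M N a -> pure_diagram n a = pure_diagram n b ->
    size a <= size b.
  move=> a_valid eq_ab; have /andP [size_gt0 _] := valid_degseq_size a_valid.
  have lt_last : (size a).-1 < size a by rewrite prednK.
  by have [lt_b _] := pure_diagram_support a_valid eq_ab lt_last; rewrite -(prednK size_gt0).
have eq_size : size d = size d'.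
  by apply/eqP; rewrite eqn_leq size_le // size_le // eq_dd'.
apply: (@eq_from_nth _ 0%R) => // i lt_i.
by have [] := pure_diagram_support d_valid eq_dd' lt_i.
Qed.

Lemma pure_le_refl n M N b : pure_in_B n M N b -> pure_le n M N b b.
Proof. by case=> d [d_valid ->]; exists d, d; split=> //; split. Qed.

Lemma maximal_chain_comparable n M N C b :
  is_maximal_chain n M N C -> pure_in_B n M N b ->
  (forall b', C b' -> pure_le n M N b' b \/ pure_le n M N b b') -> C b.
Proof.
move=> [[C_in C_total] C_max] b_in b_cmp.
apply: (C_max (fun b' => C b' \/ b' = b)); [|by left|by right].
split=> [b' [/C_in|->] //|b1 b2 [C1|->] [C2|->]].
- exact: C_total.
- exact: b_cmp.
- by case: (b_cmp _ C2); [right|left].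
- by left; exact: pure_le_refl.
Qed.

Lemma inj_surj_inverse (A B : Type) (g : A -> B) :
  injective g -> (forall y, exists x, g x = y) -> exists f : B -> A, bijective f.
Proof.
move=> g_inj /functional_choice [f gK]; exists f, g => // x.
by apply: g_inj; rewrite gK.
Qed.

Section MaximalChainsNumberings.
Variables (n : nat) (M N : int).
Hypothesis le_MN : (M <= N)%R.
Notation m := (absz (N - M)%R).
Notation shape := ('I_n.+1 -> nat).
Notation ncells := (ncells m n).

Lemma valid_degseq_absz d : valid_degseq n M N d = valid_degseq n M (M + m%:Z)%R d.
Proof. by rewrite {1}(_ : N = M + m%:Z)%R //; lia. Qed.

Definition shape_diagram (h : shape) : array n := pure_diagram n (shape_degseq m M h).

Lemma pure_in_B_shape b : pure_in_B n M N b <-> exists2 h, is_shape m h & b = shape_diagram h.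
Proof.
split=> [[d [+ ->]]|[h h_shape ->]]; last first.
  exists (shape_degseq m M h); split=> //.
  by rewrite valid_degseq_absz; exact: (valid_shape_degseq M h_shape).
rewrite valid_degseq_absz => d_valid.
exists (degseq_shape m M d); first exact: (is_shape_degseq_shape d_valid).
by rewrite /shape_diagram (degseq_shapeK d_valid).
Qed.

Lemma shape_diagram_inj h h' :
  is_shape m h -> is_shape m h' -> shape_diagram h = shape_diagram h' -> h = h'.
Proof.
move=> h_shape h'_shape /(pure_diagram_inj (valid_shape_degseq M h_shape)
  (valid_shape_degseq M h'_shape)) /(congr1 (@degseq_shape m n M)).
by rewrite !shape_degseqK.
Qed.

Lemma pure_le_shape h h' :
  is_shape m h -> is_shape m h' ->
  pure_le n M N (shape_diagram h) (shape_diagram h') <-> shape_le h h'.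
Proof.
move=> h_shape h'_shape; have d_valid := valid_shape_degseq M h_shape.
have d'_valid := valid_shape_degseq M h'_shape.
split=> [[d [d' []]]|le_hh'].
  rewrite !valid_degseq_absz => dv d'v eq_d eq_d'.
  rewrite -(pure_diagram_inj d_valid dv eq_d) -(pure_diagram_inj d'_valid d'v eq_d').
  by rewrite (degseq_le_shape_le d_valid d'_valid) !shape_degseqK.
exists (shape_degseq m M h), (shape_degseq m M h'); rewrite !valid_degseq_absz.
by split=> //; rewrite (degseq_le_shape_le d_valid d'_valid) !shape_degseqK.
Qed.

Definition numbering_chain (f : 'I_m.+1 -> 'I_n.+1 -> nat) : array n -> Prop :=
  fun b => exists2 k, k < ncells & b = shape_diagram (numbering_shape f k).

Lemma numbering_chain_maximal f :
  is_numbering m.+1 n.+1 f -> is_maximal_chain n M N (numbering_chain f).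
Proof.
move=> f_num; have f_shape := is_shape_numbering_shape f_num.
split.
  split=> [b [k lt_k ->]|b b' [k lt_k ->] [k' lt_k' ->]].
    by apply/pure_in_B_shape; exists (numbering_shape f k); first exact: f_shape.
  have [sk sk'] := (f_shape _ lt_k, f_shape _ lt_k').
  rewrite !pure_le_shape //.
  by case: (leqP k k') => [|/ltnW] le_kk'; [left|right]; exact: numbering_shape_mono.
move=> C' [C'_in C'_total] sub b C'b.
have [h h_shape eq_b] := (pure_in_B_shape b).1 (C'_in b C'b).
have lt_k := shape_rank_lt h_shape; exists (shape_rank h) => //.
rewrite eq_b; congr shape_diagram.
have C'k : C' (shape_diagram (numbering_shape f (shape_rank h))).
  by apply: sub; exists (shape_rank h).
have rank_k := shape_rank_numbering_shape f_num (ltnW lt_k).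
have sk := f_shape _ lt_k.
case: (C'_total _ _ C'b C'k); rewrite eq_b pure_le_shape // => le_h.
  by apply: shape_le_rank_eq; rewrite ?rank_k.
by apply/esym/shape_le_rank_eq; rewrite ?rank_k.
Qed.

Definition chain_of_numbering (f : numbering m.+1 n.+1) : maximal_chain n M N :=
  exist _ (numbering_chain (sval f)) (numbering_chain_maximal (svalP f)).

Lemma chain_of_numbering_inj : injective chain_of_numbering.
Proof.
move=> [f f_num] [g g_num] /(congr1 sval) /= eq_fg.
apply: eq_sig_hprop => [*|/=]; first exact: proof_irrelevance.
apply: (numbering_shape_inj f_num g_num) => k lt_k.
have : numbering_chain g (shape_diagram (numbering_shape f k)) by rewrite -eq_fg; exists k.
case=> k' lt_k' /shape_diagram_inj eq_fg_k.
have {}eq_fg_k := eq_fg_k (is_shape_numbering_shape f_num lt_k)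
  (is_shape_numbering_shape g_num lt_k').
suff eq_kk' : k = k' by rewrite eq_fg_k eq_kk'.
rewrite -(shape_rank_numbering_shape f_num (ltnW lt_k)) eq_fg_k.
exact/shape_rank_numbering_shape/ltnW.
Qed.

Definition chain_shapes (C : array n -> Prop) (h : shape) :=
  is_shape m h /\ C (shape_diagram h).

Section MaximalChainShapes.
Variable C : array n -> Prop.
Hypothesis C_max : is_maximal_chain n M N C.

Lemma chain_shapes_total h h' :
  chain_shapes C h -> chain_shapes C h' -> shape_le h h' \/ shape_le h' h.
Proof.
case: C_max => [[_ C_total] _] [h_shape Ch] [h'_shape Ch'].
by case: (C_total _ _ Ch Ch'); rewrite !pure_le_shape //; [left|right].
Qed.

Lemma chain_shapes_max X :
  is_shape m X -> (forall h, chain_shapes C h -> shape_le h X \/ shape_le X h) ->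
  chain_shapes C X.
Proof.
move=> X_shape X_cmp; split=> //; apply: (maximal_chain_comparable C_max).
  by apply/pure_in_B_shape; exists X.
case: C_max => [[C_in _] _] b Cb; have [h h_shape eq_b] := (pure_in_B_shape b).1 (C_in b Cb).
by rewrite eq_b !pure_le_shape //; apply: X_cmp; split; rewrite -?eq_b.
Qed.

Lemma chain_shapes_ranked :
  exists H : nat -> shape,
    forall k, k < ncells -> chain_shapes C (H k) /\ shape_rank (H k) = k.
Proof.
apply: (functional_choice (fun k h => k < ncells -> chain_shapes C h /\ shape_rank h = k)).
move=> k.
case: (ltnP k ncells) => [lt_k|ge_k]; last by exists (fun _ => 0).
have C_shape h : chain_shapes C h -> is_shape m h by case.
have [h [Ch rank_h]] := chain_has_rank C_shape chain_shapes_total chain_shapes_max lt_k.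
by exists h.
Qed.

Lemma maximal_chain_numbering : exists f, numbering_chain f = C /\ is_numbering m.+1 n.+1 f.
Proof.
have [H H_spec] := chain_shapes_ranked.
have H_shape k : k < ncells -> is_shape m (H k) by case/H_spec => [[]].
have H_rank k : k < ncells -> shape_rank (H k) = k by case/H_spec.
have H_mono k k' : k <= k' -> k' < ncells -> shape_le (H k) (H k').
  move=> le_kk' lt_k'; have lt_k := leq_ltn_trans le_kk' lt_k'.
  case: (chain_shapes_total (H_spec k lt_k).1 (H_spec k' lt_k').1) => // le_H.
  suff -> : H k = H k' by exact: shape_le_refl.
  apply/esym/(shape_le_rank_eq le_H); apply/eqP.
  by rewrite eqn_leq (leq_shape_rank le_H) !H_rank // le_kk'.
exists (chain_numbering H); split; last exact: is_numbering_chain_numbering.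
apply: functional_extensionality => b; apply: propositional_extensionality; split.
  case=> k lt_k ->; rewrite numbering_shape_chain_numbering //.
  by case: (H_spec k lt_k) => [[]].
case: C_max => [[C_in _] _] Cb; have [h h_shape eq_b] := (pure_in_B_shape b).1 (C_in b Cb).
have lt_k := shape_rank_lt h_shape; exists (shape_rank h) => //.
rewrite numbering_shape_chain_numbering // eq_b; congr shape_diagram.
apply: (chain_rank_inj chain_shapes_total); first by split; rewrite -?eq_b.
  exact: (H_spec _ lt_k).1.
by rewrite H_rank.
Qed.

End MaximalChainShapes.

Lemma chain_of_numbering_surj (C : maximal_chain n M N) : exists f, chain_of_numbering f = C.
Proof.
case: C => C C_max; have [f [eq_C f_num]] := maximal_chain_numbering C_max.
exists (exist _ f f_num); apply: eq_sig_hprop => [*|//]; exact: proof_irrelevance.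
Qed.

End MaximalChainsNumberings.

Local Open Scope ring_scope.

Theorem proposition2p4 (n : nat) (M N : int) :
  (1 <= n)%N -> M <= N ->
  exists f : maximal_chain n M N -> numbering (absz (N - M)).+1 n.+1,
    bijective f.
Proof.
move=> _ le_MN.
exact: (inj_surj_inverse (@chain_of_numbering_inj _ _ _ le_MN)
                         (chain_of_numbering_surj le_MN)).
Qed.
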